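(* Let $\rho$ be a good involution of the dihedral quandle $R_n$. (1) For each $i\in R_n$, $\rho(i)=i$ or $\rho(i)=i+n/2$; the latter occurs only if $n$ is even. (2) Let $n$ be even. If $\rho(i)=i+n/2$ for some $i$, then $\rho(j)=j+n/2$ for every $j$ with $i\equiv j \pmod 2$.
   Context: A quandle is a set $X$ with a binary operation $(x,y)\mapsto x^y$ such that $x^x=x$; for all $x,y$ there is a unique $z$ with $z^y=x$ (written $x^{y^{-1}}$); and $(x^y)^z=(x^z)^{(y^z)}$. A good involution of $X$ is a map $\rho:X\to X$ with $\rho\circ\rho={\rm id}$, $\rho(x^y)=\rho(x)^y$ and $x^{\rho(y)}=x^{y^{-1}}$ for all $x,y$. The dihedral quandle $R_n$ is $\mathbb{Z}/n\mathbb{Z}$ with $x^y=2y-x \pmod n$. *)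

From mathcomp Require Import all_boot.
Set Implicit Arguments. Unset Strict Implicit. Unset Printing Implicit Defensive.

(* Dihedral quandle R_n on Z/nZ, represented as 'I_n (n > 0):  x^y = 2y - x mod n. *)

Definition dih_op n (Hn : 0 < n) (x y : 'I_n) : 'I_n :=
  Ordinal (ltn_pmod (y.*2 + (n - x)) Hn).

Definition shift_half n (Hn : 0 < n) (i : 'I_n) : 'I_n :=
  Ordinal (ltn_pmod (i + n./2) Hn).

(* Good involution of a quandle (X, op).  x^{y^{-1}} is the unique z with
   z^y = x, so  x^{rho y} = x^{y^{-1}}  is stated as: z^y = x -> x^{rho y} = z. *)
Definition good_involution (X : Type) (op : X -> X -> X) (rho : X -> X) : Prop :=
  (forall x, rho (rho x) = x) /\
  (forall x y, rho (op x y) = op (rho x) y) /\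
  (forall x y z, op z y = x -> op x (rho y) = z).

From mathcomp Require Import all_boot zify.
Set Implicit Arguments. Unset Strict Implicit. Unset Printing Implicit Defensive.

(* Writing x^y = z as the congruence z + x = 2y (mod n), the quandle axiom
   x^x = x and the involution axiom x^(rho x) = x^(x^-1) = x give
   2 rho(x) = 2x (mod n), hence rho(x) = x or rho(x) = x + n/2.  When n is
   even the shift by n/2 commutes with x |-> x^y, and rho commutes with it by
   definition; since any two elements i, j of equal parity satisfy
   j = i^((i+j)/2), the value rho(i) = i + n/2 propagates to rho(j). *)

Lemma double_eqmod (n a b : nat) : a < n -> b < n -> a.*2 = b.*2 %[mod n] ->
  a = b \/ (~~ odd n /\ a = (b + n./2) %% n).
Proof.
move=> lt_an lt_bn eq2ab; have n_gt0 : 0 < n by lia.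
(* all quotients by n below are 0 or 1, which leaves finitely many cases *)
have qa : a.*2 %/ n < 2 by rewrite ltn_divLR //; lia.
have qb : b.*2 %/ n < 2 by rewrite ltn_divLR //; lia.
have qh : (b + n./2) %/ n < 2 by rewrite ltn_divLR //; lia.
move: eq2ab (odd_double_half n) (divn_eq a.*2 n) (divn_eq b.*2 n)
  (divn_eq (b + n./2) n) qa qb qh.
case: (odd n) (a.*2 %/ n) (b.*2 %/ n) ((b + n./2) %/ n)
  => [] [|[|?]] [|[|?]] [|[|?]] //=; lia.
Qed.

Section DihedralQuandle.

Variables (n : nat) (n_gt0 : 0 < n).

Local Notation op := (dih_op n_gt0).
Local Notation shift := (shift_half n_gt0).

Lemma dih_opP (x y z : 'I_n) : op x y = z <-> z + x = y.*2 %[mod n].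
Proof.
have xK : x + (n - x) = n by rewrite subnKC // ltnW.
split=> [<- | eq_zx].
  by rewrite /= modnDml -addnA [n - x + x]addnC xK modnDr.
apply: val_inj; rewrite /= -(modn_small (ltn_ord z)) -(modnDr z n).
have -> : z + n = z + x + (n - x) by rewrite -addnA xK.
by rewrite -[RHS]modnDml eq_zx modnDml.
Qed.

Lemma dih_op_idem (x : 'I_n) : op x x = x.
Proof. by apply/dih_opP; rewrite addnn. Qed.

Lemma dih_op_shiftl (x y : 'I_n) : ~~ odd n -> op (shift x) y = shift (op x y).
Proof.
move=> even_n; have /dih_opP opxy := erefl (op x y).
apply/dih_opP; rewrite /= modnDml modnDmr addnACA addnn even_halfK //.
by rewrite modnDr.
Qed.

Lemma dih_op_same_parity (i j : 'I_n) : odd i = odd j -> exists k, op i k = j.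
Proof.
move=> odd_ij; have ij2 : (i + j)./2.*2 = i + j.
  by rewrite -[RHS]odd_double_half oddD odd_ij addbb.
have lt_half : (i + j)./2 < n by have := ltn_ord i; have := ltn_ord j; lia.
by exists (Ordinal lt_half); apply/dih_opP; rewrite /= ij2 addnC.
Qed.

Variable rho : 'I_n -> 'I_n.
Hypothesis good_rho : good_involution op rho.

Lemma good_inv_self (x : 'I_n) : op x (rho x) = x.
Proof. by case: good_rho => _ [_ inv_rho]; apply: inv_rho; apply: dih_op_idem. Qed.

Lemma good_inv_double (x : 'I_n) : (rho x).*2 = x.*2 %[mod n].
Proof. by move/dih_opP: (good_inv_self x); rewrite addnn => ->. Qed.

Lemma good_inv_shift_same_parity (i j : 'I_n) : ~~ odd n ->
  rho i = shift i -> odd i = odd j -> rho j = shift j.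
Proof.
case: good_rho => _ [rho_op _] even_n rho_i odd_ij.
have [k <-] := dih_op_same_parity odd_ij.
by rewrite rho_op rho_i dih_op_shiftl.
Qed.

End DihedralQuandle.

Theorem lemma3p3 (n : nat) (Hn : 0 < n) (rho : 'I_n -> 'I_n) :
  good_involution (dih_op Hn) rho ->
  (forall i : 'I_n, rho i = i \/ (~~ odd n /\ rho i = shift_half Hn i)) /\
  (~~ odd n -> forall i : 'I_n, rho i = shift_half Hn i ->
     forall j : 'I_n, odd i = odd j -> rho j = shift_half Hn j).
Proof.
move=> good_rho; split=> [i | even_n i rho_i j]; last first.
  exact: good_inv_shift_same_parity.
have [] := double_eqmod (ltn_ord (rho i)) (ltn_ord i) (good_inv_double good_rho i).
  by left; apply: val_inj.
by move=> [even_n rho_i]; right; split=> //; apply: val_inj.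
Qed.
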